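(* Let $N\ge3$, let $A,B$ be real constants, let $a(t)$ be a nonvanishing $C^1$ function on a time interval, and let $f\ge0$ be a $C^1$ function on $\mathbb{R}$. Then \[ \rho(t,\vec x)=\frac{1}{a^2(t)}f\Big(\frac{Ax_1+Bx_2}{a(t)}\Big),\qquad \vec u(t,\vec x)=\frac{\dot a(t)}{a(t)}\big(x_1,\,x_2,\,x_1,\,\dots,\,x_1\big) \] (with $u_i=\frac{\dot a}{a}x_1$ for $3\le i\le N$) satisfy the continuity equation $\rho_t+\nabla\cdot(\rho\vec u)=0$ in $\mathbb{R}^N$. *)

From Stdlib Require Import Reals.
From Coquelicot Require Import Coquelicot.
Open Scope R_scope.

(* Points of R^N are represented as x : nat -> R; coordinate x_{i+1}
   of the paper is x i (0-indexed), only x 0 .. x (N-1) are relevant. *)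

Definition upd (x : nat -> R) (i : nat) (s : R) : nat -> R :=
  fun j => if Nat.eqb j i then s else x j.

Definition ex_partial (F : (nat -> R) -> R) (i : nat) (x : nat -> R) : Prop :=
  ex_derive (fun s => F (upd x i s)) (x i).
Definition partial (F : (nat -> R) -> R) (i : nat) (x : nat -> R) : R :=
  Derive (fun s => F (upd x i s)) (x i).

Definition in_interval (T0 T1 : Rbar) (t : R) : Prop :=
  Rbar_lt T0 t /\ Rbar_lt t T1.

Definition rho (a f : R -> R) (A B : R) (t : R) (x : nat -> R) : R :=
  / (a t) ^ 2 * f ((A * x 0%nat + B * x 1%nat) / a t).

Definition vel (a : R -> R) (i : nat) (t : R) (x : nat -> R) : R :=
  Derive a t / a t * (if Nat.eqb i 1 then x 1%nat else x 0%nat).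

From Stdlib Require Import Reals Lia.
From Coquelicot Require Import Coquelicot.
Open Scope R_scope.

(* With [c = A x1 + B x2] and [h = a'/a], the density is [a^-2 f(c/a)] and
   only the fluxes in the directions x1 and x2 depend on their own variable.
   The time derivative contributes [-2 h rho - a^-2 f'(c/a) h c/a], the two
   fluxes contribute [h rho + a^-2 f'(c/a) h A x1/a] and
   [h rho + a^-2 f'(c/a) h B x2/a], and these cancel. *)

Lemma sum_f_R0_two (g : nat -> R) (n : nat) :
  (forall i, (2 <= i)%nat -> g i = 0) -> sum_f_R0 g (S n) = g 0%nat + g 1%nat.
Proof.
  intros Hg; induction n as [|n IH]; simpl; [reflexivity|].
  simpl in IH; rewrite IH, (Hg (S (S n))) by lia; ring.
Qed.

Lemma is_derive_rho_time (a f : R -> R) (A B t : R) (x : nat -> R) :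
  ex_derive a t -> a t <> 0 -> (forall y, ex_derive f y) ->
  is_derive (fun s => rho a f A B s x) t
    (-2 * Derive a t / a t ^ 3 * f ((A * x 0%nat + B * x 1%nat) / a t)
     - / a t ^ 2 * Derive f ((A * x 0%nat + B * x 1%nat) / a t)
       * ((A * x 0%nat + B * x 1%nat) * Derive a t / a t ^ 2)).
Proof.
  intros Ha Hnz Hf; unfold rho.
  auto_derive.
  - repeat split; auto.
  - change (fun y => a y) with a; change (fun y => f y) with f.
    unfold Rdiv; field; exact Hnz.
Qed.

Lemma is_derive_affine_flux (f : R -> R) (alpha beta c k h s : R) :
  ex_derive f ((alpha * s + beta) / c) ->
  is_derive (fun s => k * f ((alpha * s + beta) / c) * (h * s)) s
    (k * f ((alpha * s + beta) / c) * h
     + k * Derive f ((alpha * s + beta) / c) * (alpha / c) * (h * s)).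
Proof.
  intros Hf; auto_derive.
  - exact Hf.
  - change (fun y => f y) with f; unfold Rdiv; ring.
Qed.

Section Fluxes.

Variables (a f : R -> R) (A B t : R) (x : nat -> R).
Hypothesis f_derivable : forall y, ex_derive f y.

Let flux (i : nat) (y : nat -> R) : R := rho a f A B t y * vel a i t y.
Let c := A * x 0%nat + B * x 1%nat.
Let h := Derive a t / a t.

Lemma is_derive_flux0 :
  is_derive (fun s => flux 0 (upd x 0 s)) (x 0%nat)
    (rho a f A B t x * h
     + / a t ^ 2 * Derive f (c / a t) * (A / a t) * (h * x 0%nat)).
Proof.
  exact (is_derive_affine_flux f A (B * x 1%nat) (a t) (/ a t ^ 2) h (x 0%nat)
           (f_derivable _)).
Qed.

Lemma is_derive_flux1 :
  is_derive (fun s => flux 1 (upd x 1 s)) (x 1%nat)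
    (rho a f A B t x * h
     + / a t ^ 2 * Derive f (c / a t) * (B / a t) * (h * x 1%nat)).
Proof.
  pose proof (is_derive_affine_flux f B (A * x 0%nat) (a t) (/ a t ^ 2) h
                (x 1%nat) (f_derivable _)) as Hd.
  rewrite (Rplus_comm (B * x 1%nat)) in Hd.
  eapply is_derive_ext, Hd; intro s.
  unfold flux, rho, vel, upd; simpl.
  rewrite (Rplus_comm (B * s)); reflexivity.
Qed.

Lemma flux_upd_high (i : nat) (s : R) :
  (2 <= i)%nat -> flux i (upd x i s) = flux i x.
Proof.
  intros Hi; destruct i as [|[|i]]; try lia; reflexivity.
Qed.

Lemma is_derive_flux_high (i : nat) :
  (2 <= i)%nat -> is_derive (fun s => flux i (upd x i s)) (x i) 0.
Proof.
  intros Hi; apply (is_derive_ext (fun _ => flux i x)).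
  - intro s; symmetry; exact (flux_upd_high i s Hi).
  - exact (is_derive_const (flux i x) (x i)).
Qed.

End Fluxes.

Theorem lemma7 (N : nat) (HN : (3 <= N)%nat) (A B : R) (T0 T1 : Rbar)
  (HT : Rbar_lt T0 T1) (a f : R -> R)
  (Ha_C1 : forall t, in_interval T0 T1 t ->
             ex_derive a t /\ continuous (Derive a) t)
  (Ha_nz : forall t, in_interval T0 T1 t -> a t <> 0)
  (Hf_C1 : forall y, ex_derive f y /\ continuous (Derive f) y)
  (Hf_nn : forall y, 0 <= f y) :
  forall t (x : nat -> R), in_interval T0 T1 t ->
    ex_derive (fun s => rho a f A B s x) t /\
    (forall i, (i < N)%nat ->
       ex_partial (fun y => rho a f A B t y * vel a i t y) i x) /\
    Derive (fun s => rho a f A B s x) t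
    + sum_f_R0 (fun i => partial (fun y => rho a f A B t y * vel a i t y) i x)
        (N - 1) = 0.
Proof.
  intros t x Ht.
  pose proof (proj1 (Ha_C1 t Ht)) as Ha.
  pose proof (Ha_nz t Ht) as Hnz.
  assert (Hf : forall y, ex_derive f y) by (intro y; apply Hf_C1).
  pose proof (is_derive_rho_time a f A B t x Ha Hnz Hf) as Dt.
  pose proof (is_derive_flux0 a f A B t x Hf) as D0.
  pose proof (is_derive_flux1 a f A B t x Hf) as D1.
  pose proof (is_derive_flux_high a f A B t x) as Dhigh.
  split; [eexists; exact Dt|split].
  - intros [|[|i]] _; unfold ex_partial; eexists;
      [exact D0 | exact D1 | apply Dhigh; lia].
  - replace (N - 1)%nat with (S (N - 2)) by lia.
    rewrite sum_f_R0_two; unfold partial.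
    2: { intros i Hi; exact (is_derive_unique _ _ _ (Dhigh i Hi)). }
    erewrite (is_derive_unique _ t), (is_derive_unique _ (x 0%nat)),
      (is_derive_unique _ (x 1%nat)) by eassumption.
    unfold rho; field; exact Hnz.
Qed.
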